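(* Let $\mathcal{G}_s$ be a connected signed graph on nodes $\{1,\dots,n\}$ with symmetric real weight matrix $W$ (entries may be negative), signed adjacency matrix $A_s$ ($[A_s]_{ij}=W_{ij}$ for neighbours $i,j$, zero otherwise), signed degree matrix $D_s=\mathrm{diag}\big(\sum_{j}|[A_s]_{ij}|\big)$ and signed Laplacian $L_s=D_s-A_s$. Take node $n$ as the single input node and partition $$L_s=\begin{bmatrix}A_s^f & B_s^f\\ (B_s^f)^T & a_s\end{bmatrix},\qquad A_s^f\in\mathbb{R}^{(n-1)\times(n-1)},\ B_s^f\in\mathbb{R}^{n-1}.$$ Assume $\mathcal{G}_s$ is structurally balanced, i.e. there is a gauge transformation $G_t=\mathrm{diag}(\sigma_1,\dots,\sigma_n)$, $\sigma_i\in\{\pm1\}$, such that $G_tA_sG_t$ has nonnegative entries, and let $L=G_tL_sG_t$ be the Laplacian of the underlying unsigned graph $\mathcal{G}$ (weights $|W_{ij}|$). Assume $\mathcal{G}$ is input symmetric: there is a permutation matrix $\Pi\neq I$ with $\Pi L=L\Pi$ that fixes the input node $n$. Then there exists a matrix $J'\neq I$ such that (1) $J'A_s^f=A_s^fJ'$; (2) $J'^TB_s^f=B_s^f$; (3) whenever $A_s^fv=\lambda v$, also $A_s^f(J'v)=\lambda J'v$ and $A_s^f(v-J'v)=\lambda(v-J'v)$.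
   Context: A gauge transformation is a diagonal matrix with diagonal entries $\pm1$; it satisfies $G_t=G_t^T=G_t^{-1}$. For a structurally balanced signed graph, $G_tL_sG_t$ equals the (unsigned) Laplacian of the graph with edge weights $|W_{ij}|$. A permutation matrix $\Pi$ commuting with the unsigned adjacency matrix (equivalently with $L$) corresponds to a (weight-preserving) graph automorphism; ''fixing node $n$'' means $\Pi e_n=e_n$. *)

From HB Require Import structures.
From mathcomp Require Import all_boot all_order all_algebra all_fingroup.
Set Implicit Arguments. Unset Strict Implicit. Unset Printing Implicit Defensive.
Import Order.TTheory GRing.Theory Num.Theory.
Local Open Scope ring_scope.

Definition input_node (m : nat) : 'I_(m + 1) := rshift m ord0.

Section Defs.
Variable R : realFieldType.
Variable N : nat.

Definition signed_adjacency (A : 'M[R]_N) : Prop :=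
  A^T = A /\ forall i, A i i = 0.

Definition connected_graph (A : 'M[R]_N) : Prop :=
  forall i j : 'I_N, connect [rel x y | A x y != 0] i j.

Definition signed_degree (A : 'M[R]_N) : 'M[R]_N :=
  \matrix_(i, j) ((i == j)%:R * \sum_k `|A i k|).

Definition signed_laplacian (A : 'M[R]_N) : 'M[R]_N := signed_degree A - A.

Definition gauge (s : 'I_N -> bool) : 'M[R]_N :=
  \matrix_(i, j) ((i == j)%:R * (-1) ^+ s i).

Definition structurally_balanced (A : 'M[R]_N) : Prop :=
  exists s : 'I_N -> bool, forall i j, 0 <= (gauge s *m A *m gauge s) i j.

Definition unsigned_laplacian (A : 'M[R]_N) : 'M[R]_N :=
  signed_laplacian (map_mx Num.norm A).
End Defs.

Definition input_symmetric (R : realFieldType) (m : nat) (L : 'M[R]_(m + 1)) : Prop :=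
  exists s : 'S_(m + 1),
    let Pi : 'M[R]_(m + 1) := perm_mx s in
    let e_n : 'cV[R]_(m + 1) := delta_mx (input_node m) 0 in
    Pi != 1%:M /\ Pi *m L = L *m Pi /\ Pi *m e_n = e_n.

From HB Require Import structures.
From mathcomp Require Import all_boot all_order all_algebra all_fingroup.
Import Order.TTheory GRing.Theory Num.Theory.
Local Open Scope ring_scope.

(* Conjugating the symmetry Pi by the balancing gauge G_t gives J = G_t Pi G_t,
   which commutes with L_s because G_t L_s G_t = L and G_t^2 = I. Since Pi
   fixes the input node and G_t is diagonal, J = diag(J', 1); the blocks of
   J L_s = L_s J and of its transpose give the commutation with A_s^f and the
   invariance of B_s^f, and commuting matrices preserve eigenspaces. *)

Section Gauge.
Context {R : realFieldType} {N : nat}.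
Implicit Types (M : 'M[R]_N) (s : 'I_N -> bool).
Local Notation gauge s := (@gauge R N s).

Lemma gauge_mulmxE s M i j : (gauge s *m M) i j = (-1) ^+ s i * M i j.
Proof.
rewrite mxE (bigD1 i) //= big1 => [|k nki]; last by rewrite !mxE eq_sym (negPf nki) !mul0r.
by rewrite !mxE eqxx mul1r addr0.
Qed.

Lemma mulmx_gaugeE s M i j : (M *m gauge s) i j = M i j * (-1) ^+ s j.
Proof.
rewrite mxE (bigD1 j) //= big1 => [|k nkj]; last by rewrite !mxE (negPf nkj) mul0r mulr0.
by rewrite !mxE eqxx mul1r addr0.
Qed.

Lemma gauge_mulmx_gauge s : gauge s *m gauge s = 1%:M.
Proof.
apply/matrixP => i j; rewrite gauge_mulmxE !mxE.
by case: eqVneq => [->|_]; rewrite ?mul1r -?expr2 ?sqrr_sign ?mul0r ?mulr0.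
Qed.

Lemma gauge_perm_mxE s (p : 'S_N) i j :
  (gauge s *m perm_mx p *m gauge s) i j = (-1) ^+ s i * (p i == j)%:R * (-1) ^+ s j.
Proof. by rewrite mulmx_gaugeE gauge_mulmxE !mxE. Qed.

Lemma signed_degree_tr M : (signed_degree M)^T = signed_degree M.
Proof. by apply/matrixP => i j; rewrite !mxE eq_sym; case: eqVneq => [->|]; rewrite ?mul0r. Qed.

Lemma signed_laplacian_tr [M] : M^T = M -> (signed_laplacian M)^T = signed_laplacian M.
Proof. by move=> MT; rewrite linearB /= MT signed_degree_tr. Qed.

Lemma gauge_signed_laplacian M s :
    (forall i j, 0 <= (gauge s *m M *m gauge s) i j) ->
  gauge s *m signed_laplacian M *m gauge s = unsigned_laplacian M.
Proof.
move=> balanced; apply/matrixP => i j.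
have gauge_norm : (-1) ^+ s i * M i j * (-1) ^+ s j = `|M i j|.
  have := balanced i j; rewrite mulmx_gaugeE gauge_mulmxE => /ger0_norm <-.
  by rewrite !normrM !normrX normrN1 !expr1n mul1r mulr1.
rewrite mulmx_gaugeE gauge_mulmxE !mxE mulrBr mulrBl gauge_norm; congr (_ - _).
case: eqVneq => [<-|_]; last by rewrite !mul0r mulr0 mul0r.
rewrite !mul1r mulrC mulrA -expr2 sqrr_sign mul1r.
by apply: eq_bigr => k _; rewrite mxE normr_id.
Qed.

End Gauge.

Lemma perm_mx_fixed {R : nzRingType} {n} [p : 'S_n] [i : 'I_n] :
  perm_mx p *m (delta_mx i 0 : 'cV[R]_n) = delta_mx i 0 -> p i = i.
Proof.
move/matrixP/(_ i 0); rewrite -row_permE !mxE !eqxx /=.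
by case: eqP => // _ /esym/eqP; rewrite oner_eq0.
Qed.

Lemma comm_mx_conj {R : pzRingType} {n} [G P L : 'M[R]_n] :
  G *m G = 1%:M -> comm_mx P (G *m L *m G) -> comm_mx (G *m P *m G) L.
Proof.
move=> GG PL.
have conjM X Y : G *m X *m G *m (G *m Y *m G) = G *m (X *m Y) *m G.
  by rewrite !mulmxA -[G *m X *m G *m G]mulmxA GG mulmx1.
have -> : L = G *m (G *m L *m G) *m G by rewrite !mulmxA GG mul1mx -mulmxA GG mulmx1.
by rewrite /comm_mx !conjM PL.
Qed.

Lemma comm_mx_tr {R : comPzRingType} {n} [X L : 'M[R]_n] :
  L^T = L -> comm_mx X L -> comm_mx X^T L.
Proof. by move=> LT XL; rewrite /comm_mx -LT -!trmx_mul XL. Qed.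

Lemma comm_mx_eigenvector {R : comPzRingType} {n} [Y A : 'M[R]_n] [v : 'cV[R]_n] [a : R] :
  comm_mx Y A -> A *m v = a *: v -> A *m (Y *m v) = a *: (Y *m v).
Proof. by move=> YA Av; rewrite mulmxA -YA -mulmxA Av scalemxAr. Qed.

Lemma fix_input_node_block {R : pzSemiRingType} {m} [X : 'M[R]_(m + 1)] :
    (forall i, X i (input_node m) = (i == input_node m)%:R) ->
    (forall j, X (input_node m) j = (input_node m == j)%:R) ->
  X = block_mx (ulsubmx X) 0 0 1%:M.
Proof.
move=> Xcol Xrow; rewrite -{1}(submxK X); congr block_mx; apply/matrixP => i j; rewrite !mxE.
- by rewrite (ord1 j) Xcol eq_lrshift.
- by rewrite (ord1 i) Xrow eq_rlshift.
- by rewrite (ord1 i) (ord1 j) Xcol !eqxx.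
Qed.

Lemma gauge_perm_mx_block {R : realFieldType} {m} (g : 'I_(m + 1) -> bool) [p : 'S_(m + 1)] :
    p (input_node m) = input_node m ->
  let J := gauge R g *m perm_mx p *m gauge R g in J = block_mx (ulsubmx J) 0 0 1%:M.
Proof.
move=> pn J; apply: fix_input_node_block => [i|j]; rewrite gauge_perm_mxE.
  rewrite -[X in p i == X]pn (inj_eq perm_inj).
  by case: eqP => [->|_]; rewrite ?mulr1 -?expr2 ?sqrr_sign ?mulr0 ?mul0r.
by rewrite pn; case: eqP => [<-|_]; rewrite ?mulr1 -?expr2 ?sqrr_sign ?mulr0 ?mul0r.
Qed.

Lemma comm_mx_block_unit {R : pzSemiRingType} {m p} [X L : 'M[R]_(m + p)] [Y : 'M[R]_m] :
    X = block_mx Y 0 0 1%:M -> comm_mx X L ->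
  comm_mx Y (ulsubmx L) /\ Y *m ursubmx L = ursubmx L.
Proof.
move=> ->; rewrite /comm_mx -[L in _ *m L = _]submxK -[L in _ = L *m _]submxK !mulmx_block.
rewrite !mul0mx !mulmx0 !mul1mx !mulmx1 !addr0 !add0r.
by case/eq_block_mx.
Qed.

Theorem lemma2 (R : realFieldType) (m : nat) (A : 'M[R]_(m + 1)) :
  signed_adjacency A -> connected_graph A ->
  structurally_balanced A ->
  input_symmetric (unsigned_laplacian A) ->
  let Af := ulsubmx (signed_laplacian A) in
  let Bf := ursubmx (signed_laplacian A) in
  exists J' : 'M[R]_m,
    J' != 1%:M /\
    J' *m Af = Af *m J' /\
    J'^T *m Bf = Bf /\
    (forall (v : 'cV[R]_m) (lambda : R), Af *m v = lambda *: v ->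
       Af *m (J' *m v) = lambda *: (J' *m v) /\
       Af *m (v - J' *m v) = lambda *: (v - J' *m v)).
Proof.
move=> [AT _] _ [g balanced] [p [Pi_neq1 [PiL Pi_en]]] Af Bf.
set G := gauge R g; set J := G *m perm_mx p *m G; set n := input_node m.
have GG : G *m G = 1%:M by apply: gauge_mulmx_gauge.
have JL : comm_mx J (signed_laplacian A).
  by apply: comm_mx_conj => //; rewrite gauge_signed_laplacian.
have JTL := comm_mx_tr (signed_laplacian_tr AT) JL.
have pn : p n = n := perm_mx_fixed Pi_en.
have Jblock : J = block_mx (ulsubmx J) 0 0 1%:M := gauge_perm_mx_block g pn.
have [J'Af _] := comm_mx_block_unit Jblock JL.
have JTblock : J^T = block_mx (ulsubmx J)^T 0 0 1%:M by rewrite {1}Jblock tr_block_mx !trmx0 trmx1.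
have [_ J'TBf] := comm_mx_block_unit JTblock JTL.
exists (ulsubmx J); split; [|split; [exact: J'Af|split; [exact: J'TBf|]]].
  apply: contra Pi_neq1 => /eqP J'1; apply/eqP.
  have J1 : J = 1%:M by rewrite Jblock J'1 -scalar_mx_block.
  have -> : perm_mx p = G *m J *m G by rewrite /J !mulmxA GG mul1mx -mulmxA GG mulmx1.
  by rewrite J1 mulmx1.
move=> v a Av; split; first exact: comm_mx_eigenvector.
rewrite -[v in v - _]mul1mx -mulmxBl.
apply: comm_mx_eigenvector Av; apply/comm_mx_sym/comm_mxB; [exact: comm_mx1|exact: comm_mx_sym].
Qed.
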